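(* Let $1\le m\le n$ and set $A_{i,m}=\prod_{j=m,\,j\ne i}^n\frac{tx_i-x_j}{x_i-x_j}$ for $m\le i\le n$. Then for every symmetric Laurent polynomial $f$ in $x_1,\dots,x_n$, $$\sum_{i=m}^n D_if=\sum_{i=m}^n A_{i,m}\,x_i^{-1}\bigl(f-\tau_if\bigr).$$
   Context: Let $n\ge1$, $q,t$ generic parameters; operators act on Laurent polynomials (or rational functions) in $x=(x_1,\dots,x_n)$ over $\mathbb{Q}(q,t)$. Let $s_i$ interchange $x_i,x_{i+1}$, $(\tau_if)(x)=f(x_1,\dots,qx_i,\dots,x_n)$, $T_i=t+\frac{tx_i-x_{i+1}}{x_i-x_{i+1}}(s_i-1)$ (invertible, $T_i^{-1}=t^{-1}-1+t^{-1}T_i$), $\omega=s_{n-1}\cdots s_1\tau_1$, $Y_i=t^{-n+i}T_i\cdots T_{n-1}\,\omega\,T_1^{-1}\cdots T_{i-1}^{-1}$, $T_{ij}^{-1}=T_i^{-1}\cdots T_{j-2}^{-1}T_{j-1}^{-1}T_{j-2}^{-1}\cdots T_i^{-1}$ for $i<j$, and $D_i=x_i^{-1}\bigl(1-t^{n-1}[1+(t^{-1}-1)\sum_{j=i+1}^n t^{j-i}T_{ij}^{-1}]Y_i\bigr)$, $1\le i\le n$. *)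

From HB Require Import structures.
From mathcomp Require Import all_boot all_order all_algebra.
From mathcomp Require Import fingroup perm generic_quotient fraction.
From mathcomp Require Import mpoly.

Set Implicit Arguments.
Unset Strict Implicit.
Unset Printing Implicit Defensive.

Import GRing.Theory.
Local Open Scope ring_scope.

Notation "x %:F" := (@FracField.tofrac _ x) (format "x %:F").

(* Ground field Q(q,t) = fraction field of Q[q,t]; q = X_0, t = X_1. *)
Notation Kqt := {fraction {mpoly rat[2]}}.
Definition qpar : Kqt := ('X_(@Ordinal 2 0 isT))%:F.
Definition tpar : Kqt := ('X_(@Ordinal 2 1 isT))%:F.

(* Field of rational functions Q(q,t)(x_1,...,x_n); x_{j+1} = X_j, j : 'I_n. *)
Notation Fx n := {fraction {mpoly Kqt[n]}}.

Section Ops.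
Variable n : nat.
Local Notation F := (Fx n).
Local Notation P := {mpoly Kqt[n]}.

Definition liftF (phi : P -> P) (f : F) : F :=
  (phi (\n_(repr f)))%:F / (phi (\d_(repr f)))%:F.

Definition cst (c : Kqt) : F := (mpolyC n c)%:F.

(* the variable x_i (1-based), 0 if i is out of range *)
Definition xp (i : nat) : P := if (insub i.-1 : option 'I_n) is Some j then 'X_j else 0.
Definition xv (i : nat) : F := (xp i)%:F.

(* s_i : interchange x_i and x_{i+1} *)
Definition sop (i : nat) : F -> F :=
  liftF (comp_mpoly [tuple (if j.+1 == i then xp i.+1
                             else if j.+1 == i.+1 then xp i else 'X_j) | j < n]).

Definition tau (i : nat) : F -> F :=
  liftF (comp_mpoly [tuple (if j.+1 == i then qpar *: 'X_j else 'X_j) | j < n]).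

(* apply the operator product P_1 P_2 ... P_k (P_k acts first) *)
Definition prodop (l : seq (F -> F)) (g : F) : F := foldr (fun o h => o h) g l.

Definition Top (i : nat) (f : F) : F :=
  cst tpar * f + (cst tpar * xv i - xv i.+1) / (xv i - xv i.+1) * (sop i f - f).

Definition Tinv (i : nat) (f : F) : F :=
  (cst tpar)^-1 * f - f + (cst tpar)^-1 * Top i f.

Definition omega (f : F) : F := prodop [seq sop k | k <- rev (iota 1 n.-1)] (tau 1 f).

Definition Yop (i : nat) (f : F) : F :=
  cst tpar ^ (Posz i - Posz n) *
  prodop ([seq Top k | k <- iota i (n - i)] ++ [:: omega] ++
          [seq Tinv k | k <- iota 1 i.-1]) f.

Definition Tijinv (i j : nat) (f : F) : F :=
  prodop ([seq Tinv k | k <- iota i (j.-1 - i)] ++ [:: Tinv j.-1] ++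
          [seq Tinv k | k <- rev (iota i (j.-1 - i))]) f.

Definition Dop (i : nat) (f : F) : F :=
  (xv i)^-1 * (f - cst tpar ^+ n.-1 *
     (Yop i f + ((cst tpar)^-1 - 1) *
        \sum_(i.+1 <= j < n.+1) cst tpar ^+ (j - i) * Tijinv i j (Yop i f))).

Definition Acoef (i m : nat) : F :=
  \prod_(m <= j < n.+1 | j != i) ((cst tpar * xv i - xv j) / (xv i - xv j)).

Definition is_laurent (f : F) : Prop :=
  exists (p : P) (k : nat), f = p%:F / ((\prod_(j < n) 'X_j : P)%:F) ^+ k.

Definition is_symmetric (f : F) : Prop :=
  forall s : 'S_n, liftF (msym s) f = f.

End Ops.

From Pilot Require Import Defs.
From HB Require Import structures.
From mathcomp Require Import all_boot all_order all_algebra.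
From mathcomp Require Import fingroup perm generic_quotient fraction.
From mathcomp Require Import mpoly.
From mathcomp Require Import ring zify.
Import GRing.Theory.
Local Open Scope ring_scope.
Set Implicit Arguments.
Unset Strict Implicit.
Unset Printing Implicit Defensive.

(* Write [Tchain i] for T_i ... T_{n-1} tau_n f.  For symmetric f every T_k^{-1}
   acts on f as t^{-1} and omega f = tau_n f, so Y_i f = t^{1-n} Tchain i, and
   T_{ij}^{-1} Tchain i = t^{i+1-j} Tchain j; hence
   D_i f = x_i^{-1} (f - Tchain i - (1-t) sum_{j>i} Tchain j).
   The bracket is obtained from its value at i+1 by applying T_i + 1 - t, and so is
   W_i h = A_{i,i} h_i + (t-1) sum_{j>i} x_i/(x_j - x_i) A_{j,i+1} h_j whenever
   s_i h_{i+1} = h_i and s_i fixes h_j for j > i+1.  Both equal h_n at i = n, so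
   the bracket is W_i (tau f), while W_i 1 = 1; thus D_i f = x_i^{-1} W_i (f - tau f).
   Finally x_i^{-1} W_i h is the difference of the right-hand sums for m = i and
   m = i+1, so both sides telescope. *)

Definition swapn (k j : nat) : nat :=
  if j == k then k.+1 else if j == k.+1 then k else j.

Ltac swapn_cases := rewrite /swapn;
  repeat match goal with |- context [?a == ?b] =>
    lazymatch a with context [if _ then _ else _] => fail | _ =>
    lazymatch b with context [if _ then _ else _] => fail | _ =>
    case: (@eqP _ a b) => ?; try subst end end end; try lia.

Lemma swapnK k : involutive (swapn k).
Proof. by move=> j; swapn_cases. Qed.

Lemma swapnC k l j : (k.+1 < l)%N -> swapn k (swapn l j) = swapn l (swapn k j).
Proof. by move=> kl; swapn_cases. Qed.

Lemma swapn_gt0 k j : (0 < k)%N -> (0 < swapn k j)%N = (0 < j)%N.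
Proof. by move=> k0; swapn_cases. Qed.

Lemma swapn_eqS k j : (swapn k j == k.+1) = (j == k).
Proof. by swapn_cases. Qed.

Lemma swapn_eq k l j : l != k -> l != k.+1 -> (swapn k j == l) = (j == l).
Proof. by move=> /eqP lk /eqP lk1; swapn_cases. Qed.

Lemma swapnL k : swapn k k = k.+1.
Proof. by rewrite /swapn eqxx. Qed.

Lemma swapnR k : swapn k k.+1 = k.
Proof. by rewrite /swapn gtn_eqF // eqxx. Qed.

Lemma swapn_id k j : j != k -> j != k.+1 -> swapn k j = j.
Proof. by rewrite /swapn => /negPf -> /negPf ->. Qed.

(* The operators of [Defs] with s_i, tau_i, x_i and t abstracted over a field;
   only the relations assumed in [GenericHecke] are used. *)
Module Generic.
Section Operators.
Variables (K : fieldType) (N : nat) (s tau : nat -> K -> K) (x : nat -> K) (u : K).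

Definition prodop (l : seq (K -> K)) (g : K) : K := foldr (fun o h => o h) g l.
Definition Top (i : nat) (f : K) : K :=
  u * f + (u * x i - x i.+1) / (x i - x i.+1) * (s i f - f).
Definition Tinv (i : nat) (f : K) : K := u^-1 * f - f + u^-1 * Top i f.
Definition omega (f : K) : K := prodop [seq s k | k <- rev (iota 1 N.-1)] (tau 1 f).
Definition Yop (i : nat) (f : K) : K :=
  u ^ (Posz i - Posz N) *
  prodop ([seq Top k | k <- iota i (N - i)] ++ [:: omega] ++
          [seq Tinv k | k <- iota 1 i.-1]) f.
Definition Tijinv (i j : nat) (f : K) : K :=
  prodop ([seq Tinv k | k <- iota i (j.-1 - i)] ++ [:: Tinv j.-1] ++
          [seq Tinv k | k <- rev (iota i (j.-1 - i))]) f.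
Definition Dop (i : nat) (f : K) : K :=
  (x i)^-1 * (f - u ^+ N.-1 *
     (Yop i f + (u^-1 - 1) *
        \sum_(i.+1 <= j < N.+1) u ^+ (j - i) * Tijinv i j (Yop i f))).
Definition Acoef (i m : nat) : K :=
  \prod_(m <= j < N.+1 | j != i) ((u * x i - x j) / (x i - x j)).

End Operators.
End Generic.

Section GenericHecke.
Variables (K : fieldType) (N : nat) (s tau : nat -> K -> K) (x : nat -> K) (u : K).

Hypothesis s_rmorph : forall k, (0 < k < N)%N ->
  exists phi : {rmorphism K -> K}, s k =1 phi.
Hypothesis sK : forall k, (0 < k < N)%N -> involutive (s k).
Hypothesis sC : forall k l, (0 < k)%N -> (k.+1 < l)%N -> (l < N)%N ->
  forall a, s k (s l a) = s l (s k a).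
Hypothesis s_tau : forall k, (0 < k < N)%N -> forall a, s k (tau k a) = tau k.+1 (s k a).
Hypothesis s_tau_id : forall k l, (0 < k < N)%N -> (0 < l)%N -> l != k -> l != k.+1 ->
  forall a, s k (tau l a) = tau l (s k a).
Hypothesis s_x : forall k j, (0 < k < N)%N -> (0 < j)%N -> s k (x j) = x (swapn k j).
Hypothesis s_u : forall k, (0 < k < N)%N -> s k u = u.
Hypothesis tau1_rmorph : exists phi : {rmorphism K -> K}, tau 1 =1 phi.
Hypothesis tau1_u : tau 1 u = u.
Hypothesis x_neq0 : forall i, (0 < i <= N)%N -> x i != 0.
Hypothesis xB_neq0 : forall i j, (0 < i <= N)%N -> (0 < j <= N)%N -> i != j -> x i - x j != 0.
Hypothesis u_neq0 : u != 0.

Local Notation prodop := (@Generic.prodop K).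
Local Notation Top := (Generic.Top s x u).
Local Notation Tinv := (Generic.Tinv s x u).
Local Notation omega := (Generic.omega N s tau).
Local Notation Yop := (Generic.Yop N s tau x u).
Local Notation Tijinv := (Generic.Tijinv s x u).
Local Notation Dop := (Generic.Dop N s tau x u).
Local Notation Acoef := (Generic.Acoef N x u).

Section SwapMorphism.
Variable k : nat.
Hypothesis kN : (0 < k < N)%N.

Lemma sD a b : s k (a + b) = s k a + s k b.
Proof. by have [phi e] := s_rmorph kN; rewrite !e rmorphD. Qed.
Lemma sB a b : s k (a - b) = s k a - s k b.
Proof. by have [phi e] := s_rmorph kN; rewrite !e rmorphB. Qed.
Lemma sM a b : s k (a * b) = s k a * s k b.
Proof. by have [phi e] := s_rmorph kN; rewrite !e rmorphM. Qed.
Lemma sV a : s k a^-1 = (s k a)^-1.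
Proof. by have [phi e] := s_rmorph kN; rewrite !e fmorphV. Qed.
Lemma s1 : s k 1 = 1.
Proof. by have [phi e] := s_rmorph kN; rewrite e rmorph1. Qed.

Lemma s_sum (a b : nat) (P : pred nat) (G : nat -> K) :
  s k (\sum_(a <= i < b | P i) G i) = \sum_(a <= i < b | P i) s k (G i).
Proof.
by have [phi e] := s_rmorph kN; rewrite e rmorph_sum; apply: eq_bigr => i _; rewrite e.
Qed.

Lemma s_prod (a b : nat) (P : pred nat) (G : nat -> K) :
  s k (\prod_(a <= i < b | P i) G i) = \prod_(a <= i < b | P i) s k (G i).
Proof.
by have [phi e] := s_rmorph kN; rewrite e rmorph_prod; apply: eq_bigr => i _; rewrite e.
Qed.

Lemma s_uVn m : s k (u^-1 ^+ m) = u^-1 ^+ m.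
Proof. by have [phi e] := s_rmorph kN; rewrite e rmorphXn fmorphV -e s_u. Qed.

Lemma s_scale c h : s k c = c -> s k (c * h) = c * s k h.
Proof. by move=> sc; rewrite sM sc. Qed.

End SwapMorphism.

Lemma tau1_uVnM m h : tau 1 (u^-1 ^+ m * h) = u^-1 ^+ m * tau 1 h.
Proof.
by have [phi e] := tau1_rmorph; rewrite !e rmorphM rmorphXn fmorphV -(e u) tau1_u.
Qed.

Lemma prodop_cat l1 l2 g : prodop (l1 ++ l2) g = prodop l1 (prodop l2 g).
Proof. by rewrite /Generic.prodop foldr_cat. Qed.

Lemma prodop_scale (T : nat -> K -> K) (l : seq nat) c :
  (forall k, k \in l -> forall h, T k (c * h) = c * T k h) ->
  forall h, prodop [seq T k | k <- l] (c * h) = c * prodop [seq T k | k <- l] h.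
Proof.
elim: l => [|k l IH] Tc h //=; rewrite IH ?Tc ?mem_head // => k' k'l.
by apply: Tc; rewrite inE k'l orbT.
Qed.

Lemma Top_id k h : s k h = h -> Top k h = u * h.
Proof. by move=> sh; rewrite /Generic.Top sh subrr mulr0 addr0. Qed.

Lemma Tinv_id k h : s k h = h -> Tinv k h = u^-1 * h.
Proof. by move=> sh; rewrite /Generic.Tinv Top_id // mulrA mulVf // mul1r subrK. Qed.

Lemma Top_scale k c h : (0 < k < N)%N -> s k c = c -> Top k (c * h) = c * Top k h.
Proof. by move=> kN sc; rewrite /Generic.Top s_scale //; ring. Qed.

Lemma Tinv_scale k c h : (0 < k < N)%N -> s k c = c -> Tinv k (c * h) = c * Tinv k h.
Proof. by move=> kN sc; rewrite /Generic.Tinv Top_scale //; ring. Qed.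

Lemma TopK k : (0 < k < N)%N -> cancel (Top k) (Tinv k).
Proof.
move=> kN h; have /andP[k0 kN'] := kN.
have x0 : x k - x k.+1 != 0 by apply: xB_neq0; lia.
have x0' : x k.+1 - x k != 0 by rewrite -opprB oppr_eq0.
have sT : s k (Top k h) = u * s k h + (u * x k.+1 - x k) / (x k.+1 - x k) * (h - s k h).
  rewrite /Generic.Top sD // !sM // sV // !sB // sM // s_u //.
  by rewrite !s_x // swapnL swapnR sK.
rewrite /Generic.Tinv [Top k (Top k h)]/Generic.Top sT /Generic.Top.
by field; rewrite x0 x0' u_neq0.
Qed.

Lemma s_Top k l h : (0 < k)%N -> (k.+1 < l)%N -> (l < N)%N ->
  s k (Top l h) = Top l (s k h).
Proof.
move=> k0 kl lN; have kN : (0 < k < N)%N by lia.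
rewrite /Generic.Top sD // !sM // sV // !sB // sM // s_u // !s_x //; try lia.
by rewrite sC // !swapn_id //; apply/eqP; lia.
Qed.

Lemma prodop_Tinv_id l h : all (fun k => 0 < k < N)%N l -> (forall k, k \in l -> s k h = h) ->
  prodop [seq Tinv k | k <- l] h = u^-1 ^+ size l * h.
Proof.
elim: l => [|k l IH] /=; first by rewrite mul1r.
case/andP=> kN lN sh; rewrite IH // => [|k' k'l]; last by rewrite sh // inE k'l orbT.
by rewrite Tinv_scale ?s_uVn // Tinv_id ?sh ?mem_head // exprS; ring.
Qed.

Lemma Tijinv_scale i j c h : (0 < i)%N -> (i < j)%N -> (j <= N)%N ->
  (forall k, (0 < k < N)%N -> s k c = c) -> Tijinv i j (c * h) = c * Tijinv i j h.
Proof.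
move=> i0 ij jN sc.
have Tc k : (0 < k < N)%N -> forall g, Tinv k (c * g) = c * Tinv k g.
  by move=> kN g; rewrite Tinv_scale ?sc.
rewrite /Generic.Tijinv !prodop_cat /= prodop_scale => [|k]; last first.
  by rewrite mem_rev mem_iota => ik; apply: Tc; lia.
rewrite Tc; last by lia.
by rewrite prodop_scale // => k; rewrite mem_iota => ik; apply: Tc; lia.
Qed.

Definition Wsum m (h : nat -> K) : K :=
  Acoef m m * h m + (u - 1) * \sum_(m.+1 <= i < N.+1) (x m / (x i - x m) * Acoef i m.+1 * h i).

Lemma AcoefS i m : (m <= N)%N -> m != i ->
  Acoef i m = (u * x i - x m) / (x i - x m) * Acoef i m.+1.
Proof. by move=> mN mi; rewrite /Generic.Acoef big_ltn_cond ?ltnS // mi. Qed.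

Lemma Acoef_diag i : (i <= N)%N -> Acoef i i = Acoef i i.+1.
Proof. by move=> iN; rewrite /Generic.Acoef big_ltn_cond ?ltnS // eqxx. Qed.

Lemma s_Acoef m i l : (0 < m < N)%N -> (0 < i)%N -> (m.+2 <= l)%N ->
  s m (Acoef i l) = Acoef (swapn m i) l.
Proof.
move=> mN i0 ml; rewrite /Generic.Acoef s_prod // big_nat_cond [RHS]big_nat_cond.
apply: eq_big => [j | j /andP[/andP[lj _] _]].
  case: (boolP (l <= j < N.+1)%N) => //= /andP[lj _].
  by rewrite ![j == _]eq_sym swapn_eq //; apply/eqP; lia.
rewrite sM // sV // !sB // sM // s_u // !s_x //; try lia.
by rewrite [swapn m j]swapn_id //; apply/eqP; lia.
Qed.

Lemma Wsum_N h : Wsum N h = h N.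
Proof. by rewrite /Wsum Acoef_diag // /Generic.Acoef !big_geq // mul1r mulr0 addr0. Qed.

Lemma Wsum_step m h : (0 < m < N)%N -> s m (h m.+1) = h m ->
  (forall i, (m.+2 <= i <= N)%N -> s m (h i) = h i) ->
  Top m (Wsum m.+1 h) + (1 - u) * Wsum m.+1 h = Wsum m h.
Proof.
move=> mN shm shi; have /andP[m0 mN'] := mN.
have xm0 : x m - x m.+1 != 0 by apply: xB_neq0; lia.
have xm0' : x m.+1 - x m != 0 by rewrite -opprB oppr_eq0.
set a := (u * x m - x m.+1) / (x m - x m.+1).
set B := Acoef m m.+2; set A1 := Acoef m.+1 m.+2.
set S1 := \sum_(m.+2 <= i < N.+1) (x m.+1 / (x i - x m.+1) * Acoef i m.+2 * h i).
set S2 := \sum_(m.+2 <= i < N.+1) (x m / (x i - x m) * Acoef i m.+2 * h i).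
have W1 : Wsum m.+1 h = A1 * h m.+1 + (u - 1) * S1 by rewrite /Wsum Acoef_diag.
have sW1 : s m (Wsum m.+1 h) = B * h m + (u - 1) * S2.
  rewrite W1 sD // !sM // s_Acoef // swapnR shm sB // s_u // s1 // s_sum //.
  congr (_ + _ * _); apply: eq_big_nat => i /andP[mi iN].
  have i0 : (0 < i)%N by lia.
  rewrite !sM // sV // sB // !s_x // swapnR s_Acoef // shi ?swapn_id //; lia.
have Wm : Wsum m h = a * B * h m +
    (u - 1) * (x m / (x m.+1 - x m) * A1 * h m.+1 + ((1 - a) * S1 + a * S2)).
  have mN1 : (m <= N)%N by lia.
  have m1m : m.+1 != m by lia.
  rewrite /Wsum Acoef_diag // (@AcoefS m m.+1) // big_ltn // (@Acoef_diag m.+1) //.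
  congr (_ + _ * (_ + _)); rewrite /S1 /S2 !mulr_sumr -big_split /=.
  apply: eq_big_nat => i /andP[mi iN]; rewrite (@AcoefS i m.+1); try lia.
  have xi0 : x i - x m != 0 by apply: xB_neq0; lia.
  have xi1 : x i - x m.+1 != 0 by apply: xB_neq0; lia.
  by rewrite /a; field; rewrite xi0 xi1 xm0.
by rewrite /Generic.Top sW1 Wm W1 /a; field; rewrite xm0 xm0'.
Qed.

Lemma Wsum1 m : (0 < m <= N)%N -> Wsum m (fun=> 1) = 1.
Proof.
move: {2}(N - m)%N (erefl (N - m)%N) => d; elim: d m => [|d IH] m dm mN.
  have -> : m = N by lia.
  by rewrite Wsum_N.
have mN' : (0 < m < N)%N by lia.
rewrite -(Wsum_step mN' (s1 mN')) => [|i _]; last exact: s1.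
by rewrite IH ?Top_id ?s1 //; [ring | lia | lia].
Qed.

Lemma Wsum_const_sub m c h : (0 < m <= N)%N -> Wsum m (fun i => c - h i) = c - Wsum m h.
Proof.
move=> mN; rewrite -{2}[c]mulr1 -(Wsum1 mN) /Wsum.
have -> : \sum_(m.+1 <= i < N.+1) x m / (x i - x m) * Acoef i m.+1 * (c - h i) =
    c * \sum_(m.+1 <= i < N.+1) x m / (x i - x m) * Acoef i m.+1 * 1 -
    \sum_(m.+1 <= i < N.+1) x m / (x i - x m) * Acoef i m.+1 * h i.
  by rewrite mulr_sumr -sumrB; apply: eq_bigr => i _; ring.
ring.
Qed.

Lemma Acoef_sum_step m h : (0 < m <= N)%N ->
  \sum_(m <= i < N.+1) Acoef i m * (x i)^-1 * h i =
  (x m)^-1 * Wsum m h + \sum_(m.+1 <= i < N.+1) Acoef i m.+1 * (x i)^-1 * h i.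
Proof.
move=> /andP[m0 mN]; have xm0 : x m != 0 by apply: x_neq0; lia.
rewrite big_ltn ?ltnS // /Wsum Acoef_diag // mulrDr -addrA; congr (_ + _); first by ring.
rewrite mulrA mulr_sumr -big_split /=; apply: eq_big_nat => i /andP[mi iN].
rewrite (@AcoefS i m); try lia.
have xi0 : x i != 0 by apply: x_neq0; lia.
have xim0 : x i - x m != 0 by apply: xB_neq0; lia.
by field; rewrite xi0 xim0 xm0.
Qed.

Section Symmetric.
Variable f : K.
Hypothesis f_sym : forall k, (0 < k < N)%N -> s k f = f.

Lemma prodop_s_tau1 j : (j < N)%N ->
  prodop [seq s k | k <- rev (iota 1 j)] (tau 1 f) = tau j.+1 f.
Proof.
elim: j => [|j IH] jN //.
have -> : iota 1 j.+1 = iota 1 j ++ [:: j.+1] by rewrite -[j.+1]addn1 iotaD /= add1n addn1.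
by rewrite rev_cat /= IH ?s_tau ?f_sym //; lia.
Qed.

Lemma omega_sym m : (0 < N)%N -> omega (u^-1 ^+ m * f) = u^-1 ^+ m * tau N f.
Proof.
move=> N0; rewrite /Generic.omega tau1_uVnM prodop_scale.
  by rewrite prodop_s_tau1 ?prednK //; lia.
by move=> k; rewrite mem_rev mem_iota => kN h; rewrite s_scale ?s_uVn //; lia.
Qed.

Definition Tchain j := prodop [seq Top k | k <- iota j (N - j)] (tau N f).

Lemma Tchain_N : Tchain N = tau N f.
Proof. by rewrite /Tchain subnn. Qed.

Lemma TchainS j : (j < N)%N -> Tchain j = Top j (Tchain j.+1).
Proof. by move=> jN; rewrite /Tchain -(subnSK jN). Qed.

Lemma s_Tchain k j : (0 < k)%N -> (k.+1 < j)%N -> (j <= N)%N -> s k (Tchain j) = Tchain j.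
Proof.
move=> k0; move: {2}(N - j)%N (erefl (N - j)%N) => d.
elim: d j => [|d IH] j dj kj jN.
  have -> : j = N by lia.
  by rewrite Tchain_N s_tau_id ?f_sym //; lia.
by rewrite TchainS ?s_Top ?IH //; lia.
Qed.

Lemma Yop_sym i : (0 < i <= N)%N -> Yop i f = u^-1 ^+ N.-1 * Tchain i.
Proof.
move=> /andP[i0 iN]; rewrite /Generic.Yop !prodop_cat prodop_Tinv_id; first last.
- by move=> k; rewrite mem_iota => kN; apply: f_sym; lia.
- by apply/allP => k; rewrite mem_iota => kN; lia.
rewrite size_iota /= omega_sym; last by lia.
rewrite prodop_scale; last first.
  by move=> k; rewrite mem_iota => kN h; rewrite Top_scale ?s_uVn //; lia.
rewrite mulrA expfzDr // -exprnN -!exprnP; congr (_ * _).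
have N0 : (0 < N)%N by lia.
rewrite -(prednK i0) -(prednK N0) /= !exprS !exprVn.
by field; rewrite !expf_neq0.
Qed.

Lemma prodop_Tinv_Tchain i d : (0 < i)%N -> (i + d <= N)%N ->
  prodop [seq Tinv k | k <- rev (iota i d)] (Tchain i) = Tchain (i + d).
Proof.
move=> i0; elim: d => [|d IH] idN; first by rewrite addn0.
have -> : iota i d.+1 = iota i d ++ [:: (i + d)%N] by rewrite -addn1 iotaD.
rewrite rev_cat /= IH; last by lia.
by rewrite TchainS ?TopK ?addnS //; lia.
Qed.

Lemma Tijinv_Tchain i j : (0 < i)%N -> (i < j)%N -> (j <= N)%N ->
  Tijinv i j (Tchain i) = u^-1 ^+ (j.-1 - i) * Tchain j.
Proof.
move=> i0 ij jN; rewrite /Generic.Tijinv !prodop_cat prodop_Tinv_Tchain //; last by lia.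
have -> : (i + (j.-1 - i))%N = j.-1 by lia.
rewrite /= TchainS ?prednK ?TopK; try lia.
rewrite prodop_Tinv_id ?size_iota //.
  by apply/allP => k; rewrite mem_iota => ik; lia.
by move=> k; rewrite mem_iota => ik; apply: s_Tchain; lia.
Qed.


Lemma Dop_sym i : (0 < i <= N)%N ->
  Dop i f = (x i)^-1 * (f - (Tchain i + (1 - u) * \sum_(i.+1 <= j < N.+1) Tchain j)).
Proof.
move=> /andP[i0 iN]; rewrite /Generic.Dop Yop_sym ?i0 //.
set c := u^-1 ^+ N.-1.
have sc k : (0 < k < N)%N -> s k c = c by move=> kN; rewrite s_uVn.
have -> : \sum_(i.+1 <= j < N.+1) u ^+ (j - i) * Tijinv i j (c * Tchain i) =
          c * u * \sum_(i.+1 <= j < N.+1) Tchain j.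
  rewrite mulr_sumr; apply: eq_big_nat => j /andP[ij jN].
  rewrite Tijinv_scale ?Tijinv_Tchain //; try lia.
  have -> : (j - i = (j.-1 - i).+1)%N by lia.
  by rewrite exprS exprVn; field; rewrite expf_neq0.
have cN : u ^+ N.-1 * c = 1 by rewrite /c exprVn mulfV // expf_neq0.
congr (_ * (_ - _)); rewrite mulrDr !mulrA cN mul1r; congr (_ + _ * _).
by rewrite /c exprVn; field; rewrite expf_neq0.
Qed.



Lemma Tchain_Wsum m : (0 < m <= N)%N ->
  Tchain m + (1 - u) * \sum_(m.+1 <= j < N.+1) Tchain j = Wsum m (fun i => tau i f).
Proof.
move: {2}(N - m)%N (erefl (N - m)%N) => d; elim: d m => [|d IH] m dm mN.
  have -> : m = N by lia.
  by rewrite Tchain_N big_geq // mulr0 addr0 Wsum_N.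
have mN' : (0 < m < N)%N by lia.
have s_taum : s m (tau m.+1 f) = tau m f.
  by rewrite -[f in tau m.+1 f](f_sym mN') -s_tau // sK.
have s_taui i : (m.+2 <= i <= N)%N -> s m (tau i f) = tau i f.
  by move=> mi; rewrite s_tau_id ?f_sym //; lia.
have dm1 : d = (N - m.+1)%N by lia.
have m1N : (0 < m.+1 <= N)%N by lia.
have mN1 : (m.+1 < N.+1)%N by lia.
have mlt : (m < N)%N by lia.
rewrite -(Wsum_step mN' s_taum s_taui) -IH // big_ltn // (TchainS mlt).
set S := \sum_(_ <= _ < _) _.
have sS : s m S = S by rewrite s_sum //; apply: eq_big_nat => j mj; apply: s_Tchain; lia.
by rewrite /Generic.Top sD // sM // sB // s1 // s_u // sS; ring.
Qed.

Lemma Dop_Wsum m : (0 < m <= N)%N -> Dop m f = (x m)^-1 * Wsum m (fun i => f - tau i f).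
Proof. by move=> mN; rewrite Dop_sym // Tchain_Wsum // Wsum_const_sub. Qed.

Lemma sum_Dop_sym m : (0 < m <= N.+1)%N ->
  \sum_(m <= i < N.+1) Dop i f = \sum_(m <= i < N.+1) Acoef i m * (x i)^-1 * (f - tau i f).
Proof.
move: {2}(N.+1 - m)%N (erefl (N.+1 - m)%N) => d; elim: d m => [|d IH] m dm mN.
  by rewrite !big_geq //; lia.
have mN' : (0 < m <= N)%N by lia.
have dm1 : d = (N.+1 - m.+1)%N by lia.
have m1N : (0 < m.+1 <= N.+1)%N by lia.
have mN1 : (m < N.+1)%N by lia.
by rewrite big_ltn // Acoef_sum_step // Dop_Wsum // IH.
Qed.

End Symmetric.

End GenericHecke.

Lemma frac_repr (R : idomainType) (f : {fraction R}) :
  f = (\n_(repr f))%:F / (\d_(repr f))%:F.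
Proof.
have hd : (\d_(repr f))%:F != 0 by rewrite tofrac_eq0 denom_ratioP.
apply: (mulIf hd); rewrite mulfVK // -[f in LHS]reprK !piE.
apply/eqmodP; rewrite /= FracField.equivfE /=.
rewrite !numden_Ratio ?(oner_eq0, mulf_neq0, denom_ratioP) //.
by rewrite !mulr1 reprK mulrC.
Qed.

Section LiftF.
Variable n : nat.
Local Notation F := (Fx n).
Local Notation P := {mpoly Kqt[n]}.

Lemma liftF_ext (phi psi : P -> P) : phi =1 psi -> liftF phi =1 liftF psi.
Proof. by move=> e f; rewrite /liftF !e. Qed.

Lemma liftF_id : liftF (idfun : P -> P) =1 id.
Proof. by move=> f; rewrite [RHS]frac_repr. Qed.

Section InjectiveMorphism.
Variable phi : {rmorphism P -> P}.
Hypothesis phi_inj : injective phi.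

Lemma rmorph_inj_neq0 p : p != 0 -> phi p != 0.
Proof. by apply: contra => /eqP e; apply/eqP/phi_inj; rewrite e rmorph0. Qed.

Lemma liftF_frac a b : b != 0 -> liftF phi (a%:F / b%:F) = (phi a)%:F / (phi b)%:F.
Proof.
move=> b0; rewrite /liftF; set f := a%:F / b%:F.
have := frac_repr f; case: (repr f) => [[N D] /= D0].
have phiD0 : phi D != 0 by exact: rmorph_inj_neq0.
have phib0 : phi b != 0 by exact: rmorph_inj_neq0.
rewrite /f => /eqP; rewrite eqr_div ?tofrac_eq0 // -!tofracM tofrac_eq => /eqP e.
apply/eqP; rewrite eqr_div ?tofrac_eq0 // -!tofracM -!rmorphM.
by rewrite e mulrC.
Qed.

Lemma liftF_tofrac a : liftF phi a%:F = (phi a)%:F.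
Proof.
by rewrite -[a%:F]divr1 -tofrac1 liftF_frac ?oner_eq0 // rmorph1 tofrac1 divr1.
Qed.

(* Without injectivity a denominator could be sent to 0, so the morphism
   structure is attached to a copy of [liftF phi] indexed by the proof. *)
Definition liftF_inj of injective phi := liftF phi.

Lemma liftF_inj_is_zmod_morphism : zmod_morphism (liftF_inj phi_inj).
Proof.
move=> f g; rewrite [f]frac_repr [g]frac_repr /liftF_inj.
case: (repr f) => [[a b] /= b0]; case: (repr g) => [[c d] /= d0].
have phib0 : phi b != 0 by exact: rmorph_inj_neq0.
have phid0 : phi d != 0 by exact: rmorph_inj_neq0.
rewrite !liftF_frac // -!mulNr -!tofracN !addf_div ?tofrac_eq0 // -!tofracM -!tofracD.
by rewrite liftF_frac ?mulf_neq0 // rmorphD !rmorphM rmorphN.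
Qed.

Lemma liftF_inj_is_monoid_morphism : monoid_morphism (liftF_inj phi_inj).
Proof.
split=> [|f g]; first by rewrite /liftF_inj -tofrac1 liftF_tofrac rmorph1.
rewrite [f]frac_repr [g]frac_repr /liftF_inj.
case: (repr f) => [[a b] /= b0]; case: (repr g) => [[c d] /= d0].
have phib0 : phi b != 0 by exact: rmorph_inj_neq0.
have phid0 : phi d != 0 by exact: rmorph_inj_neq0.
rewrite !liftF_frac // !mulf_div -!tofracM.
by rewrite liftF_frac ?mulf_neq0 // !rmorphM.
Qed.

HB.instance Definition _ := GRing.isZmodMorphism.Build F F (liftF_inj phi_inj)
  liftF_inj_is_zmod_morphism.
HB.instance Definition _ := GRing.isMonoidMorphism.Build F F (liftF_inj phi_inj)
  liftF_inj_is_monoid_morphism.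

End InjectiveMorphism.

Lemma liftF_comp (phi psi : {rmorphism P -> P}) : injective phi -> injective psi ->
  forall f, liftF psi (liftF phi f) = liftF (psi \o phi) f.
Proof.
move=> phi_inj psi_inj f.
by rewrite [liftF phi f]/liftF liftF_frac // rmorph_inj_neq0 ?denom_ratioP.
Qed.

Lemma liftF_comm (phi psi phi' psi' : {rmorphism P -> P}) :
  injective phi -> injective psi -> injective phi' -> injective psi' ->
  psi \o phi =1 psi' \o phi' -> forall f, liftF psi (liftF phi f) = liftF psi' (liftF phi' f).
Proof. by move=> ? ? ? ? e f; rewrite !liftF_comp //; apply: liftF_ext. Qed.
End LiftF.

Section MPolyX.
Variables (R : ringType) (n : nat).

Lemma mpolyX_neq0 (i : 'I_n) : 'X_i != 0 :> {mpoly R[n]}.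
Proof.
apply/eqP => /(congr1 (mcoeff U_(i))).
by rewrite mcoeffXU eqxx mcoeff0 => /eqP; rewrite oner_eq0.
Qed.

Lemma mpolyXB_neq0 (i j : 'I_n) : i != j -> 'X_i - 'X_j != 0 :> {mpoly R[n]}.
Proof.
move=> ij; apply/eqP => /(congr1 (mcoeff U_(i))).
rewrite mcoeffB !mcoeffXU eqxx eq_sym (negPf ij) subr0 mcoeff0 => /eqP.
by rewrite oner_eq0.
Qed.

End MPolyX.

Lemma qpar_neq0 : qpar != 0.
Proof. by rewrite tofrac_eq0 mpolyX_neq0. Qed.

Lemma tpar_neq0 : tpar != 0.
Proof. by rewrite tofrac_eq0 mpolyX_neq0. Qed.

Section Substitutions.
Variable n : nat.
Local Notation P := {mpoly Kqt[n]}.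

(* [xp n 0 = xp n 1] because [0.-1 = 0], hence the side conditions [0 < i] below. *)
Lemma xpE (j : 'I_n) : xp n j.+1 = 'X_j.
Proof. by rewrite /xp /=; case: insubP => [j' _ /val_inj -> | ]; rewrite ?ltn_ord. Qed.

Lemma xp_out i : (n < i)%N -> xp n i = 0.
Proof. by move=> ni; rewrite /xp; case: insubP => // j; lia. Qed.

Lemma xp_in i : (0 < i <= n)%N -> exists j : 'I_n, i = j.+1.
Proof.
case/andP=> i0 ilen; have ilt : (i.-1 < n)%N by lia.
by exists (Ordinal ilt) => /=; lia.
Qed.

Lemma comp_mpoly_comp (A B : n.-tuple P) p :
  comp_mpoly A (comp_mpoly B p) = comp_mpoly [tuple comp_mpoly A (tnth B j) | j < n] p.
Proof.
rewrite (comp_mpolyEX p B) (comp_mpolyEX p) raddf_sum /=; apply: eq_bigr => m _.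
rewrite comp_mpolyZ !comp_mpolyX rmorph_prod; congr (_ *: _); apply: eq_bigr => i _.
by rewrite rmorphXn tnth_mktuple.
Qed.

Lemma eq_comp_mpoly2 (A B C D : n.-tuple P) :
  (forall j, comp_mpoly A (tnth B j) = comp_mpoly C (tnth D j)) ->
  forall p, comp_mpoly A (comp_mpoly B p) = comp_mpoly C (comp_mpoly D p).
Proof.
move=> e p; rewrite [LHS]comp_mpoly_comp [RHS]comp_mpoly_comp.
apply: (congr1 (fun T => comp_mpoly T p)); apply: eq_from_tnth => j.
by rewrite [LHS]tnth_mktuple [RHS]tnth_mktuple.
Qed.

Definition swap_tuple (k : nat) : n.-tuple P :=
  [tuple (if j.+1 == k then xp n k.+1 else if j.+1 == k.+1 then xp n k else 'X_j) | j < n].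
Definition scale_tuple (k : nat) (c : Kqt) : n.-tuple P :=
  [tuple (if j.+1 == k then c *: 'X_j else 'X_j) | j < n].

Lemma sopE k : @sop n k = liftF (comp_mpoly (swap_tuple k)).
Proof. by []. Qed.
Lemma tauE k : @tau n k = liftF (comp_mpoly (scale_tuple k qpar)).
Proof. by []. Qed.

Lemma tnth_swap_tuple k (j : 'I_n) : tnth (swap_tuple k) j = xp n (swapn k j.+1).
Proof. by rewrite tnth_mktuple /swapn; case: eqP => //; case: eqP => //; rewrite xpE. Qed.

Lemma tnth_scale_tuple k c (j : 'I_n) :
  tnth (scale_tuple k c) j = if j.+1 == k then c *: xp n j.+1 else xp n j.+1.
Proof. by rewrite tnth_mktuple xpE. Qed.

Lemma comp_swap_xp k i : (k < n)%N -> (0 < i)%N ->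
  comp_mpoly (swap_tuple k) (xp n i) = xp n (swapn k i).
Proof.
move=> kn i0; case: (leqP i n) => [ilen | nli].
  have [j ->] := xp_in (introT andP (conj i0 ilen)).
  by rewrite {1}xpE comp_mpolyXU -tnth_nth tnth_swap_tuple.
by rewrite xp_out // raddf0 swapn_id ?xp_out //; apply/eqP; lia.
Qed.

Lemma comp_scale_xp k c i : (0 < i)%N ->
  comp_mpoly (scale_tuple k c) (xp n i) = if i == k then c *: xp n i else xp n i.
Proof.
move=> i0; case: (leqP i n) => [ilen | nli].
  have [j ->] := xp_in (introT andP (conj i0 ilen)).
  by rewrite {1}xpE comp_mpolyXU -tnth_nth tnth_scale_tuple.
by rewrite xp_out // raddf0 scaler0; case: ifP.
Qed.

End Substitutions.

Section Relations.
Variable n : nat.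
Local Notation P := {mpoly Kqt[n]}.

Lemma comp_mpoly2_id (A B : n.-tuple P) :
  (forall j, comp_mpoly A (tnth B j) = 'X_j) -> forall p, comp_mpoly A (comp_mpoly B p) = p.
Proof.
move=> e p; rewrite (@eq_comp_mpoly2 _ A B [tuple 'X_j | j < n] [tuple 'X_j | j < n]).
  by rewrite !comp_mpoly_id.
by move=> j; rewrite e comp_mpoly_id tnth_mktuple.
Qed.

Lemma swap_tupleK k : (0 < k < n)%N ->
  forall p, comp_mpoly (swap_tuple n k) (comp_mpoly (swap_tuple n k) p) = p.
Proof.
case/andP=> k0 kn; apply: comp_mpoly2_id => j.
by rewrite tnth_swap_tuple comp_swap_xp ?swapnK ?xpE ?swapn_gt0.
Qed.

Lemma scale_tupleK k c : c != 0 -> (0 < k)%N ->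
  forall p, comp_mpoly (scale_tuple n k c^-1) (comp_mpoly (scale_tuple n k c) p) = p.
Proof.
move=> c0 k0; apply: comp_mpoly2_id => j; rewrite tnth_scale_tuple.
case: ifP => jk; last by rewrite comp_scale_xp // jk xpE.
by rewrite comp_mpolyZ comp_scale_xp // jk scalerA mulfV // scale1r xpE.
Qed.

Definition swap_mpoly k : {rmorphism P -> P} := comp_mpoly (swap_tuple n k).
Definition scale_mpoly k c : {rmorphism P -> P} := comp_mpoly (scale_tuple n k c).

Lemma swap_mpoly_inj k : (0 < k < n)%N -> injective (swap_mpoly k).
Proof. by move=> kn; apply: can_inj (swap_tupleK kn). Qed.

Lemma tau_mpoly_inj k : (0 < k)%N -> injective (scale_mpoly k qpar).
Proof. by move=> k0; apply: can_inj (scale_tupleK qpar_neq0 k0). Qed.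


Lemma sopK k : (0 < k < n)%N -> involutive (@sop n k).
Proof.
move=> kn f; have inj := swap_mpoly_inj kn.
rewrite sopE (@liftF_comp _ (swap_mpoly k) (swap_mpoly k)) //.
by rewrite (liftF_ext (swap_tupleK kn)) liftF_id.
Qed.

Lemma sopC k l : (0 < k)%N -> (k.+1 < l)%N -> (l < n)%N ->
  forall f, @sop n k (sop l f) = sop l (sop k f).
Proof.
move=> k0 kl ln; have l0 : (0 < l)%N by lia.
have kn : (k < n)%N by lia.
have kn' : (0 < k < n)%N by lia.
have ln' : (0 < l < n)%N by lia.
apply: (liftF_comm (swap_mpoly_inj ln') (swap_mpoly_inj kn') (swap_mpoly_inj kn')
  (swap_mpoly_inj ln')) => p /=.
apply: eq_comp_mpoly2 => j; rewrite !tnth_swap_tuple.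
by rewrite [LHS]comp_swap_xp ?swapn_gt0 // [RHS]comp_swap_xp ?swapn_gt0 // swapnC.
Qed.

Lemma sop_tau k : (0 < k < n)%N -> forall f, @sop n k (tau k f) = tau k.+1 (sop k f).
Proof.
move=> /andP[k0 kn].
apply: (liftF_comm (tau_mpoly_inj k0) (swap_mpoly_inj (introT andP (conj k0 kn)))
  (swap_mpoly_inj (introT andP (conj k0 kn))) (tau_mpoly_inj (ltn0Sn k))) => p /=.
apply: eq_comp_mpoly2 => j; rewrite tnth_scale_tuple tnth_swap_tuple.
rewrite comp_scale_xp ?swapn_gt0 // swapn_eqS.
by case: ifP; rewrite ?comp_mpolyZ comp_swap_xp.
Qed.

Lemma sop_tau_id k l : (0 < k < n)%N -> (0 < l)%N -> l != k -> l != k.+1 ->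
  forall f, @sop n k (tau l f) = tau l (sop k f).
Proof.
move=> /andP[k0 kn] l0 lk lk1.
apply: (liftF_comm (tau_mpoly_inj l0) (swap_mpoly_inj (introT andP (conj k0 kn)))
  (swap_mpoly_inj (introT andP (conj k0 kn))) (tau_mpoly_inj l0)) => p /=.
apply: eq_comp_mpoly2 => j; rewrite tnth_scale_tuple tnth_swap_tuple.
rewrite comp_scale_xp ?swapn_gt0 // swapn_eq //.
by case: ifP; rewrite ?comp_mpolyZ comp_swap_xp.
Qed.

Lemma sop_xv k j : (0 < k < n)%N -> (0 < j)%N -> @sop n k (xv n j) = xv n (swapn k j).
Proof.
move=> kn j0; rewrite sopE /xv (liftF_tofrac (swap_mpoly_inj kn)) /=.
by rewrite comp_swap_xp //; lia.
Qed.

Lemma sop_cst k c : (0 < k < n)%N -> @sop n k (cst n c) = cst n c.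
Proof.
by move=> kn; rewrite sopE /cst (liftF_tofrac (swap_mpoly_inj kn)) /= comp_mpolyC.
Qed.

Lemma tau_cst k c : (0 < k)%N -> @tau n k (cst n c) = cst n c.
Proof.
by move=> k0; rewrite tauE /cst (liftF_tofrac (tau_mpoly_inj k0)) /= comp_mpolyC.
Qed.

Lemma sop_sym f : is_symmetric f -> forall k, (0 < k < n)%N -> @sop n k f = f.
Proof.
move=> fsym k /andP[k0 kn]; have k1n : (k.-1 < n)%N by lia.
set s := tperm (Ordinal k1n) (Ordinal kn).
rewrite -[RHS](fsym s) sopE; apply: liftF_ext => p /=.
rewrite -[msym s p]comp_mpoly_id msym_mPo.
apply: (congr1 (fun T => comp_mpoly T p)); apply: eq_from_tnth => j.
rewrite tnth_swap_tuple [RHS]tnth_mktuple tnth_mktuple.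
case: tpermP => [-> | -> | /eqP jk1 /eqP jk].
- by rewrite /swapn prednK // eqxx -xpE.
- by rewrite /swapn gtn_eqF // eqxx -xpE /= prednK.
rewrite swapn_id ?xpE //; apply/eqP => e.
by move/eqP: jk1; apply; apply/val_inj => /=; lia.
Qed.

Lemma xv_neq0 i : (0 < i <= n)%N -> xv n i != 0.
Proof. by case/xp_in=> j ->; rewrite /xv xpE tofrac_eq0 mpolyX_neq0. Qed.

Lemma xvB_neq0 i j : (0 < i <= n)%N -> (0 < j <= n)%N -> i != j -> xv n i - xv n j != 0.
Proof.
by case/xp_in=> a -> /xp_in[b ->] ab; rewrite /xv !xpE -tofracB tofrac_eq0 mpolyXB_neq0.
Qed.

Lemma t_neq0 : cst n tpar != 0.
Proof. by rewrite tofrac_eq0 mpolyC_eq0 tpar_neq0. Qed.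

End Relations.


Section Instance.
Variable n : nat.

Lemma sop_rmorph k : (0 < k < n)%N -> exists phi : {rmorphism Fx n -> Fx n}, @sop n k =1 phi.
Proof. by move=> kn; exists (liftF_inj (swap_mpoly_inj kn)). Qed.

Lemma tau1_rmorph : exists phi : {rmorphism Fx n -> Fx n}, @tau n 1 =1 phi.
Proof. by exists (liftF_inj (tau_mpoly_inj (ltn0Sn 0))). Qed.

Lemma Yop_Generic i (f : Fx n) :
  Yop i f = Generic.Yop n (@sop n) (@tau n) (xv n) (cst n tpar) i f.
Proof. by rewrite /Yop /Generic.Yop /prodop /Generic.prodop /omega /Generic.omega. Qed.

Lemma Tijinv_Generic i j (f : Fx n) :
  Tijinv i j f = Generic.Tijinv (@sop n) (xv n) (cst n tpar) i j f.
Proof. by rewrite /Tijinv /Generic.Tijinv /prodop /Generic.prodop. Qed.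

Lemma Dop_Generic i (f : Fx n) :
  Dop i f = Generic.Dop n (@sop n) (@tau n) (xv n) (cst n tpar) i f.
Proof.
rewrite /Dop /Generic.Dop Yop_Generic.
by under eq_bigr do rewrite Tijinv_Generic.
Qed.

End Instance.

Unset Implicit Arguments.
Set Strict Implicit.

Theorem lemma5p3 (n m : nat) (hm : (1 <= m <= n)%N) (f : Fx n)
  (hL : is_laurent f) (hS : is_symmetric f) :
  \sum_(m <= i < n.+1) Dop i f =
  \sum_(m <= i < n.+1) Acoef n i m * (xv n i)^-1 * (f - tau i f).
Proof.
have mN : (0 < m <= n.+1)%N by lia.
under eq_bigr do rewrite Dop_Generic.
exact: (sum_Dop_sym (@sop_rmorph n) (@sopK n) (@sopC n) (@sop_tau n) (@sop_tau_id n)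
  (@sop_xv n) (fun k => @sop_cst n k tpar) (tau1_rmorph n) (@tau_cst n 1 tpar isT)
  (@xv_neq0 n) (@xvB_neq0 n) (@t_neq0 n) (sop_sym hS) mN).
Qed.
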